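(* Assume the quantities $\overline{P}^c_e(t)$ and $\overline{P}^d_e(t)$ defined in the context are positive for all $t=1,\ldots,T$ (e.g. if $\underline{S}<s_0<\overline{S}$). Then for every $t\in\{1,\ldots,T\}$ and every $\overline{\tau}\in\{0,\ldots,T-t\}$ the linear inequalities $$\sum_{\tau=0}^{\overline{\tau}}\Big(p^c_{t+\tau}+\overline{\rho}^c(t,\tau,\overline{\tau})\,p^d_{t+\tau}\Big)\le\sum_{\tau=0}^{\overline{\tau}}c(t,\tau),\qquad(\mathrm{VIc})$$ $$\sum_{\tau=0}^{\overline{\tau}}\Big(p^d_{t+\tau}+\overline{\rho}^d(t,\tau,\overline{\tau})\,p^c_{t+\tau}\Big)\le\sum_{\tau=0}^{\overline{\tau}}d(t,\tau)\qquad(\mathrm{VId})$$ are satisfied by every $(p^d,p^c,s)\in\mathcal{P}$.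
   Context: Let $T\ge1$ be an integer, $\Delta>0$, $\eta_c,\eta_d\in(0,1]$, $\overline{P}^d,\overline{P}^c>0$, $\underline{S}<\overline{S}$, and a given initial state of charge $s_0\in[\underline{S},\overline{S}]$. The storage feasible set $\mathcal{P}$ is the set of $(p^d,p^c,s)\in\mathbb{R}^T_{\ge0}\times\mathbb{R}^T_{\ge0}\times\mathbb{R}^T_{\ge0}$ with $p^d_t\le\overline{P}^d$, $p^c_t\le\overline{P}^c$, $\underline{S}\le s_t\le\overline{S}$, $s_t=s_{t-1}+\Delta(\eta_cp^c_t-p^d_t/\eta_d)$ for $t=1,\ldots,T$, and $p^d_tp^c_t=0$ for all $t$. Let $\overline{P}^d_e=\min\{\overline{P}^d,\eta_d(\overline{S}-\underline{S})/\Delta\}$, $\overline{P}^c_e=\min\{\overline{P}^c,(\overline{S}-\underline{S})/(\Delta\eta_c)\}$, and $[x]^+=\max\{x,0\}$. Set $\underline{s}_0(0)=\overline{s}_0(0)=s_0$ and for $t=1,\ldots,T-1$: $\underline{s}_0(t)=\max\{\underline{s}_0(t-1)-\Delta\overline{P}^d_e/\eta_d,\ \underline{S}\}$, $\overline{s}_0(t)=\min\{\overline{s}_0(t-1)+\Delta\eta_c\overline{P}^c_e,\ \overline{S}\}$. For $t=1,\ldots,T$, $\overline{\tau}=0,\ldots,T-t$: $c(t,\overline{\tau})=\min\{\overline{P}^c_e,\ [(\overline{S}-\underline{s}_0(t-1))/(\Delta\eta_c)-\overline{\tau}\,\overline{P}^c_e]^+\}$, $d(t,\overline{\tau})=\min\{\overline{P}^d_e,\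 [(\overline{s}_0(t-1)-\underline{S})\eta_d/\Delta-\overline{\tau}\,\overline{P}^d_e]^+\}$. For $\tau=0,\ldots,T-2$: $\overline{c}(\tau)=\min\{\overline{P}^c_e,[(\overline{S}-\underline{S})/(\Delta\eta_c)-\tau\overline{P}^c_e]^+\}$, $\overline{d}(\tau)=\min\{\overline{P}^d_e,[(\overline{S}-\underline{S})\eta_d/\Delta-\tau\overline{P}^d_e]^+\}$. For $t=1,\ldots,T$: $\overline{P}^c_e(t)=c(t,0)$, $\overline{P}^d_e(t)=d(t,0)$. For $t=1,\ldots,T$, $\overline{\tau}=0,\ldots,T-t$, $\tau=0,\ldots,\overline{\tau}$: $\rho^c(t,\tau,\overline{\tau})=\max\{-\overline{P}^d_e(t+\tau)/(\eta_d\eta_c),\ \sum_{j=\tau}^{\overline{\tau}}c(t,j)-\sum_{j=0}^{\overline{\tau}-\tau-1}\overline{c}(j)\}$, $\rho^d(t,\tau,\overline{\tau})=\max\{-\eta_d\eta_c\overline{P}^c_e(t+\tau),\ \sum_{j=\tau}^{\overline{\tau}}d(t,j)-\sum_{j=0}^{\overline{\tau}-\tau-1}\overline{d}(j)\}$ (empty sums are $0$); $\overline{\rho}^c(t,\tau,\overline{\tau})=-1/(\eta_d\eta_c)$ if $\rho^c(t,\tau,\overline{\tau})\le0$ and $=\rho^c(t,\tau,\overline{\tau})/\overline{P}^d_e(t+\tau)$ otherwise; $\overline{\rho}^d(t,\tau,\overline{\tau})=-\eta_d\eta_c$ if $\rho^d(t,\tau,\overline{\tau})\le0$ and $=\rho^d(t,\tau,\overline{\tau})/\overline{P}^c_e(t+\tau)$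 otherwise. *)

From mathcomp Require Import all_boot all_order all_algebra.
Set Implicit Arguments. Unset Strict Implicit. Unset Printing Implicit Defensive.
Import Order.TTheory GRing.Theory Num.Theory.
Local Open Scope ring_scope.

Record params (R : realFieldType) := Params {
  Delta : R; eta_c : R; eta_d : R; Pdmax : R; Pcmax : R;
  Smin : R; Smax : R; s0 : R }.

Section Storage.
Variable R : realFieldType.
Variable p : params R.
Local Notation Delta := (Delta p).
Local Notation eta_c := (eta_c p).
Local Notation eta_d := (eta_d p).
Local Notation Pdmax := (Pdmax p).
Local Notation Pcmax := (Pcmax p).
Local Notation Smin := (Smin p).
Local Notation Smax := (Smax p).
Local Notation s0 := (s0 p).

Definition pos (x : R) : R := Num.max x 0.

Definition PdE : R := Num.min Pdmax (eta_d * (Smax - Smin) / Delta).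
Definition PcE : R := Num.min Pcmax ((Smax - Smin) / (Delta * eta_c)).

Fixpoint slo (t : nat) : R :=
  match t with
  | 0%N => s0
  | t'.+1 => Num.max (slo t' - Delta * PdE / eta_d) Smin
  end.
Fixpoint shi (t : nat) : R :=
  match t with
  | 0%N => s0
  | t'.+1 => Num.min (shi t' + Delta * eta_c * PcE) Smax
  end.

Definition cc (t taub : nat) : R :=
  Num.min PcE (pos ((Smax - slo t.-1) / (Delta * eta_c) - taub%:R * PcE)).
Definition dd (t taub : nat) : R :=
  Num.min PdE (pos ((shi t.-1 - Smin) * eta_d / Delta - taub%:R * PdE)).

Definition cbar (tau : nat) : R :=
  Num.min PcE (pos ((Smax - Smin) / (Delta * eta_c) - tau%:R * PcE)).
Definition dbar (tau : nat) : R :=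
  Num.min PdE (pos ((Smax - Smin) * eta_d / Delta - tau%:R * PdE)).

Definition PcEt (t : nat) : R := cc t 0.
Definition PdEt (t : nat) : R := dd t 0.

Definition rhoc (t tau taub : nat) : R :=
  Num.max (- PdEt (t + tau) / (eta_d * eta_c))
    (\sum_(tau <= j < taub.+1) cc t j - \sum_(0 <= j < taub - tau) cbar j).
Definition rhod (t tau taub : nat) : R :=
  Num.max (- (eta_d * eta_c * PcEt (t + tau)))
    (\sum_(tau <= j < taub.+1) dd t j - \sum_(0 <= j < taub - tau) dbar j).

Definition rhocbar (t tau taub : nat) : R :=
  if rhoc t tau taub <= 0 then - (1 / (eta_d * eta_c))
  else rhoc t tau taub / PdEt (t + tau).
Definition rhodbar (t tau taub : nat) : R :=
  if rhod t tau taub <= 0 then - (eta_d * eta_c)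
  else rhod t tau taub / PcEt (t + tau).

Definition feasible (T : nat) (pd pc s : nat -> R) : Prop :=
  s 0%N = s0 /\
  forall t : nat, (1 <= t <= T)%N ->
    (0 <= pd t /\ pd t <= Pdmax) /\ (0 <= pc t /\ pc t <= Pcmax) /\
    (0 <= s t /\ Smin <= s t /\ s t <= Smax) /\
    s t = s t.-1 + Delta * (eta_c * pc t - pd t / eta_d) /\
    pd t * pc t = 0.

End Storage.

From mathcomp Require Import all_boot all_order all_algebra.
From mathcomp Require Import lra ring zify.
Set Implicit Arguments. Unset Strict Implicit. Unset Printing Implicit Defensive.
Import Order.TTheory GRing.Theory Num.Theory.
Local Open Scope ring_scope.

(* Consider (VIc); (VId) is the same argument with charging and discharging
   exchanged. The sequences c(t,.) and cbar are staircases
   j |-> min(P, [C - j P]^+) with P = Pbar^c_e, and the sum of the first m+1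
   steps is min((m+1) P, [C]^+). Telescoping the state equation over the
   window gives the energy balance  sum (p^c - p^d / (eta_d eta_c)) <= C  for
   C = (Sbar - \underline{s}_0(t-1)) / (Delta eta_c). If the last step
   c(t, taubar) vanishes, every coefficient rhobar^c equals -1/(eta_d eta_c)
   and (VIc) is the balance itself. Otherwise all earlier steps are full,
   rho^c collapses to c(t, taubar), and by complementarity each term
   p^c + c(t, taubar) p^d / Pbar^d_e(t+tau) is at most P, and at most
   c(t, taubar) in a discharging period: a window with a discharging period is
   bounded by m P + c(t, taubar), one without by the balance. *)

(* The comparisons are restated so that lra recognises them: as produced by
   [boolP] on the unfolded min/max they carry an instance path lra ignores. *)
Ltac case_le a b :=
  let H := fresh in case: (boolP (a <= b)) => H;
  [have {H} H : a <= b := H | have {H} H : b < a by rewrite ltNge].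
Ltac case_minmax := rewrite /pos; repeat match goal with
  | |- context[Order.max ?a ?b] => rewrite (maxEle a b); case_le a b
  | |- context[Order.min ?a ?b] => rewrite (minEle a b); case_le a b
  end.

Section Staircase.
Variables (R : realFieldType) (P : R).

(* c(t,.), d(t,.), cbar and dbar of the paper are all of the form [stair P C]. *)
Definition stair (C : R) (j : nat) : R := Num.min P (pos (C - j%:R * P)).

Let natS_mulP j : j.+1%:R * P = j%:R * P + P.
Proof. by rewrite -addn1 natrD mulrDl mul1r. Qed.

Lemma stair_ge0 C j : 0 <= P -> 0 <= stair C j.
Proof. by move=> P_ge0; rewrite /stair /pos le_min P_ge0 le_max lexx orbT. Qed.

Lemma stair_le C j : stair C j <= P.
Proof. by rewrite /stair ge_min lexx. Qed.

Lemma stair_addn_le C U i j : 0 <= P -> C <= U -> stair C (i + j) <= stair U i.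
Proof.
move=> P_ge0 CU; apply: le_min2 => //; apply: le_max2 => //.
have : 0 <= j%:R * P by rewrite mulr_ge0.
rewrite natrD mulrDl; lra.
Qed.

Lemma sum_stair C n : 0 <= P ->
  \sum_(0 <= j < n) stair C j = Num.min (n%:R * P) (pos C).
Proof.
move=> P_ge0; elim: n C => [|n IH] C; first by rewrite big_geq // mul0r; case_minmax; lra.
rewrite big_nat_recl //.
have -> : \sum_(0 <= j < n) stair C j.+1 = \sum_(0 <= j < n) stair (C - P) j.
  by apply: eq_big_nat => j _; rewrite /stair natS_mulP opprD addrA addrAC.
rewrite IH /stair mul0r subr0 natS_mulP.
have : 0 <= n%:R * P by rewrite mulr_ge0.
move: (n%:R * P) => X X_ge0; case_minmax; lra.
Qed.

Lemma stair_full C j m : 0 <= P -> (j < m)%N -> 0 < stair C m -> stair C j = P.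
Proof.
rewrite /stair => P_ge0 jm; have : j.+1%:R * P <= m%:R * P by rewrite ler_wpM2r // ler_nat.
rewrite natS_mulP; case_minmax; lra.
Qed.

Lemma sum_stair_full C m : 0 <= P ->
  0 < stair C m -> \sum_(0 <= j < m.+1) stair C j = P *+ m + stair C m.
Proof.
move=> P_ge0 Cm_gt0; rewrite big_nat_recr //= (eq_big_nat _ _ (F2 := fun=> P)).
  by rewrite sumr_const_nat subn0.
by move=> j /andP[_ jm]; rewrite (stair_full P_ge0 jm).
Qed.

Lemma ge_sum_stair C m : 0 < P ->
  stair C m <= 0 -> C <= \sum_(0 <= j < m.+1) stair C j.
Proof.
move=> P_gt0; have P_ge0 := ltW P_gt0.
rewrite sum_stair // /stair natS_mulP.
have : 0 <= m%:R * P by rewrite mulr_ge0.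
move: (m%:R * P) => X X_ge0; case_minmax; move=> *; lra.
Qed.

End Staircase.

Lemma sum_le_except_one (R : realFieldType) (f : nat -> R) (B c : R) m t0 :
  (t0 <= m)%N -> (forall tau, (tau <= m)%N -> f tau <= B) -> f t0 <= c ->
  \sum_(0 <= tau < m.+1) f tau <= B *+ m + c.
Proof.
move=> t0m f_le ft0_le.
rewrite (big_cat_nat _ (n := t0)) ?(leqW t0m) //= [X in _ + X]big_ltn ?ltnS //.
have before : \sum_(0 <= tau < t0) f tau <= B *+ t0.
  rewrite -[t0 in B *+ t0]subn0 -sumr_const_nat.
  by apply: ler_sum_nat => tau /andP[_ tau_lt]; apply: f_le; lia.
have after : \sum_(t0.+1 <= tau < m.+1) f tau <= B *+ (m - t0).
  rewrite -subSS -sumr_const_nat.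
  by apply: ler_sum_nat => tau /andP[_ tau_lt]; apply: f_le; lia.
rewrite -[in B *+ m](subnKC t0m) mulrnDr; lra.
Qed.

Lemma complementary_term_le (R : realFieldType) (a P Q x y : R) :
  0 <= a <= P -> x <= P -> 0 <= y <= Q -> 0 < Q -> x * y = 0 ->
  x + a / Q * y <= P /\ (0 < y -> x + a / Q * y <= a).
Proof.
move=> /andP[a_ge0 a_le] x_le /andP[y_ge0 y_le] Q_gt0 /eqP.
have ay_le : a / Q * y <= a.
  by rewrite mulrAC ler_pdivrMr // ler_wpM2l.
rewrite mulf_eq0 => /orP[] /eqP ->.
  by rewrite add0r; split=> [|_ //]; apply: le_trans ay_le a_le.
by rewrite mulr0 addr0 ltxx; split.
Qed.

Section CutInequality.
Variables (R : realFieldType) (P C U k : R) (m : nat) (x y Q L : nat -> R).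

(* With Q, L and k as in [charge_cut] / [discharge_cut], [rhobar] unfolds to
   [rhocbar] / [rhodbar]. *)
Definition rho_tail tau :=
  \sum_(tau <= j < m.+1) stair P C j - \sum_(0 <= j < m - tau) stair P U j.
Definition rho tau := Num.max (L tau) (rho_tail tau).
Definition rhobar tau := if rho tau <= 0 then - k else rho tau / Q tau.

Lemma rho_tail_le tau : 0 <= P -> C <= U -> (tau <= m)%N ->
  rho_tail tau <= stair P C m.
Proof.
move=> P_ge0 CU tau_le; rewrite /rho_tail big_nat_recr //= -{1}(add0n tau) big_addn.
suff : \sum_(0 <= i < m - tau) stair P C (i + tau) <= \sum_(0 <= i < m - tau) stair P U i.
  by lra.
by apply: ler_sum_nat => i _; apply: stair_addn_le.
Qed.

Lemma rho_tail_last tau : 0 <= P -> C <= U -> (tau <= m)%N ->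
  0 < stair P C m -> rho_tail tau = stair P C m.
Proof.
move=> P_ge0 CU tau_le Cm_gt0.
have Um_gt0 : 0 < stair P U m.
  by rewrite (lt_le_trans Cm_gt0) // -[m in stair P C m]addn0 stair_addn_le.
rewrite /rho_tail big_nat_recr //= -{1}(add0n tau) big_addn.
rewrite (eq_big_nat _ _ (F2 := stair P U)); first by rewrite addrAC subrr add0r.
move=> i /andP[_ i_lt].
have [iC iU] : (i + tau < m)%N /\ (i < m)%N by lia.
by rewrite (stair_full P_ge0 iC Cm_gt0) (stair_full P_ge0 iU Um_gt0).
Qed.

Lemma rhobar_nonpos tau : 0 <= P -> C <= U -> (tau <= m)%N ->
  L tau <= 0 -> stair P C m <= 0 -> rhobar tau = - k.
Proof.
move=> P_ge0 CU tau_le L_le0 Cm_le0.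
by rewrite /rhobar ifT // ge_max L_le0 (le_trans (rho_tail_le _ _ _)).
Qed.

Lemma rhobar_pos tau : 0 <= P -> C <= U -> (tau <= m)%N ->
  L tau <= 0 -> 0 < stair P C m -> rhobar tau = stair P C m / Q tau.
Proof.
move=> P_ge0 CU tau_le L_le0 Cm_gt0.
rewrite /rhobar /rho rho_tail_last // (max_idPr (le_trans L_le0 (ltW Cm_gt0))).
by rewrite leNgt Cm_gt0.
Qed.

Lemma sum_rhobar_le : 0 < P -> C <= U ->
  (forall tau, (tau <= m)%N -> L tau <= 0) ->
  (forall tau, (tau <= m)%N ->
     [/\ x tau <= P, 0 <= y tau <= Q tau, 0 < Q tau & x tau * y tau = 0]) ->
  \sum_(0 <= tau < m.+1) (x tau - k * y tau) <= C ->
  \sum_(0 <= tau < m.+1) (x tau + rhobar tau * y tau)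
    <= \sum_(0 <= tau < m.+1) stair P C tau.
Proof.
move=> P_gt0 CU L_le0 xy_ok balance; have P_ge0 := ltW P_gt0.
have [Cm_le0|Cm_gt0] := leP (stair P C m) 0.
  rewrite (eq_big_nat _ _ (F2 := fun tau => x tau - k * y tau)).
    exact: le_trans balance (ge_sum_stair P_gt0 Cm_le0).
  by move=> tau /andP[_ tau_lt]; rewrite rhobar_nonpos ?L_le0 // mulNr.
rewrite (eq_big_nat _ _ (F2 := fun tau => x tau + stair P C m / Q tau * y tau)); last first.
  by move=> tau /andP[_ tau_lt]; rewrite rhobar_pos ?L_le0.
have term_le tau : (tau <= m)%N -> x tau + stair P C m / Q tau * y tau <= P /\
    (0 < y tau -> x tau + stair P C m / Q tau * y tau <= stair P C m).
  move=> tau_le; have [x_le y_bd Q_gt0 xy0] := xy_ok _ tau_le.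
  by apply: complementary_term_le; rewrite ?stair_ge0 ?stair_le.
have [/hasP[t0]|/hasPn no_charge] := boolP (has (fun tau => 0 < y tau) (index_iota 0 m.+1)).
  rewrite mem_index_iota ltnS => t0_le y_gt0.
  rewrite sum_stair_full //.
  apply: (sum_le_except_one (f := fun tau => x tau + stair P C m / Q tau * y tau) t0_le).
    by move=> tau /term_le[].
  exact: (term_le _ t0_le).2.
have y0 tau : (tau <= m)%N -> y tau = 0.
  move=> tau_le; have [_ /andP[y_ge0 _] _ _] := xy_ok _ tau_le.
  by apply/eqP; rewrite eq_le y_ge0 leNgt no_charge // mem_index_iota.
rewrite (eq_big_nat _ _ (F2 := x)); last first.
  by move=> tau /andP[_ tau_lt]; rewrite y0 // mulr0 addr0.
have discharge_free : \sum_(0 <= tau < m.+1) (x tau - k * y tau) = \sum_(0 <= tau < m.+1) x tau.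
  by apply: eq_big_nat => tau /andP[_ tau_lt]; rewrite y0 // mulr0 subr0.
rewrite discharge_free in balance.
rewrite sum_stair // le_min; apply/andP; split; last first.
  by rewrite (le_trans balance) // le_max lexx.
apply: (@le_trans _ _ (\sum_(0 <= tau < m.+1) P)).
  by apply: ler_sum_nat => tau /andP[_ tau_lt]; have [] := xy_ok tau tau_lt.
by rewrite sumr_const_nat subn0 mulr_natl.
Qed.

End CutInequality.

Lemma telescope_shift (V : zmodType) (F u : nat -> V) t m :
  (forall k, (t < k <= t + m.+1)%N -> u k = F k - F k.-1) ->
  \sum_(0 <= tau < m.+1) u (t.+1 + tau)%N = F (t + m.+1)%N - F t.
Proof.
move=> uE; rewrite -(@telescope_sumr_eq _ t (t + m.+1) F (fun k => u k.+1)) ?leq_addr //.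
  rewrite -[X in _ = \sum_(X <= _ < _) _]add0n big_addn addKn.
  by apply: eq_big_nat => tau _; rewrite addSn addnC.
by move=> k /andP[tk kl]; apply: uE; lia.
Qed.

Section Storage.
Variables (R : realFieldType) (p : params R) (T : nat) (pd pc s : nat -> R).
Local Notation Delta := (Delta p).
Local Notation eta_c := (eta_c p).
Local Notation eta_d := (eta_d p).
Local Notation Smin := (Smin p).
Local Notation Smax := (Smax p).

Hypotheses (Delta_gt0 : 0 < Delta) (eta_c_gt0 : 0 < eta_c) (eta_d_gt0 : 0 < eta_d).
Hypotheses (s0_ge : Smin <= s0 p) (s0_le : s0 p <= Smax).
Hypothesis feas : feasible p T pd pc s.

Lemma state_bounds k : (k <= T)%N -> Smin <= s k <= Smax.
Proof.
case: k => [_|k kT]; first by rewrite feas.1 s0_ge s0_le.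
by have [_ [_ [[_ [lo hi]] _]]] := feas.2 k.+1 kT; rewrite lo hi.
Qed.

Lemma prev_state_bounds k : (1 <= k <= T)%N -> Smin <= s k.-1 <= Smax.
Proof. by case/andP=> _ kT; apply: state_bounds; rewrite (leq_trans (leq_pred k)). Qed.

Lemma discharge_le_stored k : (1 <= k <= T)%N ->
  pd k * Delta <= (s k.-1 - Smin) * eta_d.
Proof.
move=> kT; have [_ [_ [[_ [s_ge _]] [s_step /eqP]]]] := feas.2 k kT.
have /andP[prev_ge _] := prev_state_bounds kT.
rewrite mulf_eq0 => /orP[] /eqP idle.
  by rewrite idle mul0r mulr_ge0 ?subr_ge0 // ltW.
have drained : Delta * (pd k / eta_d) <= s k.-1 - Smin.
  by move: s_ge; rewrite s_step idle mulr0 sub0r mulrN; lra.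
have -> : pd k * Delta = Delta * (pd k / eta_d) * eta_d by field; rewrite gt_eqF.
by rewrite ler_wpM2r // ltW.
Qed.

Lemma charge_le_free k : (1 <= k <= T)%N ->
  pc k * (Delta * eta_c) <= Smax - s k.-1.
Proof.
move=> kT; have [_ [_ [[_ [_ s_le]] [s_step /eqP]]]] := feas.2 k kT.
have /andP[_ prev_le] := prev_state_bounds kT.
rewrite mulf_eq0 => /orP[] /eqP idle.
  by move: s_le; rewrite s_step idle mul0r subr0 mulrA [pc k * _]mulrC; lra.
by rewrite idle mul0r subr_ge0.
Qed.

Lemma pd_le_PdE k : (1 <= k <= T)%N -> pd k <= PdE p.
Proof.
move=> kT; have [[_ pd_le] _] := feas.2 k kT.
have /andP[_ prev_le] := prev_state_bounds kT.
rewrite le_min pd_le ler_pdivlMr //=; apply: le_trans (discharge_le_stored kT) _.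
by rewrite mulrC ler_wpM2l ?lerD2r // ltW.
Qed.

Lemma pc_le_PcE k : (1 <= k <= T)%N -> pc k <= PcE p.
Proof.
move=> kT; have [_ [[_ pc_le] _]] := feas.2 k kT.
have /andP[prev_ge _] := prev_state_bounds kT.
rewrite le_min pc_le ler_pdivlMr ?mulr_gt0 //=; apply: le_trans (charge_le_free kT) _.
by rewrite lerD2l lerN2.
Qed.

Lemma state_reachable k : (k <= T)%N -> slo p k <= s k <= shi p k.
Proof.
elim: k => [_|k IH kT]; first by rewrite feas.1 /= lexx.
have kT1 : (1 <= k.+1 <= T)%N by rewrite kT.
have /andP[lo hi] := IH (ltnW kT).
have [[pd_ge0 _] [[pc_ge0 _] [[_ [s_ge s_le]] [s_step _]]]] := feas.2 _ kT1.
have charge_ge0 : 0 <= Delta * (eta_c * pc k.+1).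
  by rewrite !mulr_ge0 // ltW.
have charge_le : Delta * (eta_c * pc k.+1) <= Delta * (eta_c * PcE p).
  by rewrite ler_wpM2l ?ler_wpM2l ?pc_le_PcE // ltW.
have discharge_ge0 : 0 <= Delta * (pd k.+1 / eta_d).
  by rewrite !mulr_ge0 ?invr_ge0 // ltW.
have discharge_le : Delta * (pd k.+1 / eta_d) <= Delta * (PdE p / eta_d).
  by rewrite ler_wpM2l ?ler_wpM2r ?invr_ge0 ?pd_le_PdE // ltW.
rewrite /= ge_max le_min s_ge s_le !andbT s_step /= -!mulrA; apply/andP; split.
  by move: discharge_le; rewrite mulrBr; lra.
by move: charge_le discharge_ge0; rewrite mulrBr; lra.
Qed.

Lemma slo_ge_Smin k : Smin <= slo p k.
Proof. by case: k => [|k] //=; rewrite le_max lexx orbT. Qed.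

Lemma shi_le_Smax k : shi p k <= Smax.
Proof. by case: k => [|k] //=; rewrite ge_min lexx orbT. Qed.

Lemma pd_le_PdEt k : (1 <= k <= T)%N -> pd k <= PdEt p k.
Proof.
move=> kT; have /andP[_ reach] := state_reachable (k := k.-1) (leq_trans (leq_pred k) (andP kT).2).
rewrite /PdEt /dd le_min pd_le_PdE //= mul0r subr0 /pos le_max ler_pdivlMr //.
by rewrite (le_trans (discharge_le_stored kT)) // ler_wpM2r ?lerD2r // ltW.
Qed.

Lemma pc_le_PcEt k : (1 <= k <= T)%N -> pc k <= PcEt p k.
Proof.
move=> kT; have /andP[reach _] := state_reachable (k := k.-1) (leq_trans (leq_pred k) (andP kT).2).
rewrite /PcEt /cc le_min pc_le_PcE //= mul0r subr0 /pos le_max ler_pdivlMr ?mulr_gt0 //.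
by rewrite (le_trans (charge_le_free kT)) // lerD2l lerN2.
Qed.

Lemma charge_balance t m : (t + m.+1 <= T)%N ->
  \sum_(0 <= tau < m.+1) (pc (t.+1 + tau)%N - 1 / (eta_d * eta_c) * pd (t.+1 + tau)%N)
    = (s (t + m.+1)%N - s t) / (Delta * eta_c).
Proof.
move=> tmT; rewrite (telescope_shift (F := fun k => s k / (Delta * eta_c))
  (u := fun k => pc k - 1 / (eta_d * eta_c) * pd k)) ?mulrBl // => k tk.
have kT : (1 <= k <= T)%N.
  by case/andP: tk => t_lt k_le; rewrite (leq_ltn_trans (leq0n t) t_lt) (leq_trans k_le).
have [_ [_ [_ [s_step _]]]] := feas.2 k kT.
by rewrite s_step; field; rewrite !gt_eqF.
Qed.

Lemma discharge_balance t m : (t + m.+1 <= T)%N ->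
  \sum_(0 <= tau < m.+1) (pd (t.+1 + tau)%N - eta_d * eta_c * pc (t.+1 + tau)%N)
    = (s t - s (t + m.+1)%N) * eta_d / Delta.
Proof.
move=> tmT; rewrite (telescope_shift (F := fun k => - s k * eta_d / Delta)
  (u := fun k => pd k - eta_d * eta_c * pc k)); first by ring.
move=> k tk; have kT : (1 <= k <= T)%N.
  by case/andP: tk => t_lt k_le; rewrite (leq_ltn_trans (leq0n t) t_lt) (leq_trans k_le).
have [_ [_ [_ [s_step _]]]] := feas.2 k kT.
by rewrite s_step; field; rewrite !gt_eqF.
Qed.

Hypothesis PEt_gt0 : forall k, (1 <= k <= T)%N -> 0 < PcEt p k /\ 0 < PdEt p k.

Lemma charge_cut t m : (t + m.+1 <= T)%N ->
  \sum_(0 <= tau < m.+1) (pc (t.+1 + tau)%N + rhocbar p t.+1 tau m * pd (t.+1 + tau)%N)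
    <= \sum_(0 <= tau < m.+1) cc p t.+1 tau.
Proof.
move=> tmT; have t1T : (1 <= t.+1 <= T)%N by lia.
have in_range tau : (tau <= m)%N -> (1 <= t.+1 + tau <= T)%N by lia.
apply: (sum_rhobar_le (U := (Smax - Smin) / (Delta * eta_c))
    (x := fun tau => pc (t.+1 + tau)%N) (y := fun tau => pd (t.+1 + tau)%N)
    (Q := fun tau => PdEt p (t.+1 + tau))
    (L := fun tau => - PdEt p (t.+1 + tau) / (eta_d * eta_c))).
- by have [+ _] := PEt_gt0 t1T; rewrite /PcEt /cc lt_min => /andP[].
- apply: ler_wpM2r; first by rewrite invr_ge0 mulr_ge0 // ltW.
  by rewrite lerD2l lerN2 slo_ge_Smin.
- move=> tau /in_range kT.
  by rewrite mulNr oppr_le0 divr_ge0 ?mulr_ge0 ?ltW // (PEt_gt0 kT).2.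
- move=> tau /in_range kT; have [[pd_ge0 _] [_ [_ [_ compl]]]] := feas.2 _ kT.
  by split; rewrite ?pc_le_PcE ?pd_ge0 ?pd_le_PdEt ?(PEt_gt0 kT).2 // mulrC.
- have /andP[_ s_le] := state_bounds (k := t + m.+1) tmT.
  have /andP[reach _] : slo p t <= s t <= shi p t by apply: state_reachable; lia.
  rewrite charge_balance //; apply: ler_wpM2r; last exact: lerB.
  by rewrite invr_ge0 mulr_ge0 // ltW.
Qed.

Lemma discharge_cut t m : (t + m.+1 <= T)%N ->
  \sum_(0 <= tau < m.+1) (pd (t.+1 + tau)%N + rhodbar p t.+1 tau m * pc (t.+1 + tau)%N)
    <= \sum_(0 <= tau < m.+1) dd p t.+1 tau.
Proof.
move=> tmT; have t1T : (1 <= t.+1 <= T)%N by lia.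
have in_range tau : (tau <= m)%N -> (1 <= t.+1 + tau <= T)%N by lia.
apply: (sum_rhobar_le (U := (Smax - Smin) * eta_d / Delta)
    (x := fun tau => pd (t.+1 + tau)%N) (y := fun tau => pc (t.+1 + tau)%N)
    (Q := fun tau => PcEt p (t.+1 + tau))
    (L := fun tau => - (eta_d * eta_c * PcEt p (t.+1 + tau)))).
- by have [_ +] := PEt_gt0 t1T; rewrite /PdEt /dd lt_min => /andP[].
- apply: ler_wpM2r; first by rewrite invr_ge0 ltW.
  by apply: ler_wpM2r; rewrite ?lerD2r ?shi_le_Smax // ltW.
- move=> tau /in_range kT.
  by rewrite oppr_le0 !mulr_ge0 ?ltW // (PEt_gt0 kT).1.
- move=> tau /in_range kT; have [_ [[pc_ge0 _] [_ [_ compl]]]] := feas.2 _ kT.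
  by split; rewrite ?pd_le_PdE ?pc_ge0 ?pc_le_PcEt ?(PEt_gt0 kT).1.
- have /andP[s_ge _] := state_bounds (k := t + m.+1) tmT.
  have /andP[_ reach] : slo p t <= s t <= shi p t by apply: state_reachable; lia.
  rewrite discharge_balance //; apply: ler_wpM2r; first by rewrite invr_ge0 ltW.
  by apply: ler_wpM2r; [exact: ltW | exact: lerB].
Qed.

End Storage.

Theorem theorem1 (R : realFieldType) (T : nat) (p : params R) :
  (1 <= T)%N -> 0 < Delta p ->
  0 < eta_c p -> eta_c p <= 1 -> 0 < eta_d p -> eta_d p <= 1 ->
  0 < Pdmax p -> 0 < Pcmax p -> Smin p < Smax p ->
  Smin p <= s0 p -> s0 p <= Smax p ->
  (forall t : nat, (1 <= t <= T)%N -> 0 < PcEt p t /\ 0 < PdEt p t) ->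
  forall pd pc s : nat -> R,
  feasible p T pd pc s ->
  forall t taub : nat, (1 <= t <= T)%N -> (taub <= T - t)%N ->
    \sum_(0 <= tau < taub.+1)
       (pc (t + tau)%N + rhocbar p t tau taub * pd (t + tau)%N)
      <= \sum_(0 <= tau < taub.+1) cc p t tau
    /\
    \sum_(0 <= tau < taub.+1)
       (pd (t + tau)%N + rhodbar p t tau taub * pc (t + tau)%N)
      <= \sum_(0 <= tau < taub.+1) dd p t tau.
Proof.
move=> _ Delta_gt0 eta_c_gt0 _ eta_d_gt0 _ _ _ _ s0_ge s0_le PEt_gt0
  pd pc s feas [//|t] taub /andP[_ tT] taub_le.
have tmT : (t + taub.+1 <= T)%N by lia.
by split; [apply: (charge_cut (T := T) (s := s)) | apply: (discharge_cut (T := T) (s := s))].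
Qed.
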